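(* Let $X\subset\mathbb{R}^2$ be a set in convex position. Then $$\mathcal{M}_X=\bigcap\{\mathcal{M}_Y : Y\subset X,\ \#Y=3\}.$$
   Context: A set $S\subset\mathbb{R}^2$ is in convex position if every point of $S$ lies on the boundary of $\mathrm{conv}(S)$. For a point set $X\subset\mathbb{R}^2$ and a point $O$, $X_O=2O-X$ is the reflection of $X$ in $O$. The point $O$ is an admissible center for $X$ if $X\cup X_O$ is in convex position; $\mathcal{M}_X$ denotes the set of all admissible centers for $X$. (Note $X$ is in c.s.c. position, i.e. contained in the boundary of a centrally symmetric convex body, iff $\mathcal{M}_X\neq\emptyset$.) *)

From Stdlib Require Import Reals List.
Open Scope R_scope.

Definition pt : Type := (R * R)%type.

Definition ptset : Type := pt -> Prop.

Definition dist2 (p q : pt) : R :=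
  (fst p - fst q) * (fst p - fst q) + (snd p - snd q) * (snd p - snd q).

(* convex hull: the set of all finite convex combinations of points of S *)
Definition wsum (l : list (R * pt)) : pt :=
  fold_right (fun wx acc => (fst acc + fst wx * fst (snd wx),
                             snd acc + fst wx * snd (snd wx))) (0, 0) l.
Definition wtotal (l : list (R * pt)) : R :=
  fold_right (fun wx acc => acc + fst wx) 0 l.

Definition conv (S : ptset) : ptset := fun p =>
  exists l : list (R * pt),
    Forall (fun wx => 0 <= fst wx /\ S (snd wx)) l /\
    wtotal l = 1 /\ p = wsum l.

Definition in_interior (A : ptset) (p : pt) : Prop :=
  exists e, 0 < e /\ forall q, dist2 p q < e * e -> A q.
Definition in_closure (A : ptset) (p : pt) : Prop :=
  forall e, 0 < e -> exists q, A q /\ dist2 p q < e * e.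
Definition on_boundary (A : ptset) (p : pt) : Prop :=
  in_closure A p /\ ~ in_interior A p.

Definition convex_position (S : ptset) : Prop :=
  forall p, S p -> on_boundary (conv S) p.

Definition refl_pt (O p : pt) : pt := (2 * fst O - fst p, 2 * snd O - snd p).
Definition refl_set (X : ptset) (O : pt) : ptset :=
  fun q => exists x, X x /\ q = refl_pt O x.

Definition set_union (A B : ptset) : ptset := fun p => A p \/ B p.

Definition admissible_center (X : ptset) (O : pt) : Prop :=
  convex_position (set_union X (refl_set X O)).
Definition M (X : ptset) : ptset := fun O => admissible_center X O.

Definition subset (Y X : ptset) : Prop := forall p, Y p -> X p.

Definition card3 (Y : ptset) : Prop :=
  exists a b c : pt, a <> b /\ a <> c /\ b <> c /\
    forall z, Y z <-> (z = a \/ z = b \/ z = c).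

(* A point q of S lies on the boundary of conv S iff S lies in a closed half-plane whose
   boundary line passes through q.  If there is no such half-plane, a supremum argument
   shows that every ray from q meets conv S, so conv S contains a diamond around q.
   Since X u X_O is symmetric about O, it is enough to look at q = x in X; the admissible
   normals are then the common nonzero elements of the cones
   K_y = {v | v.(y - x) <= 0, v.(2O - y - x) <= 0}, y in X.  All of them lie in the
   half-plane v.(O - x) <= 0, so they are arcs of a half-circle of directions, and Helly's
   theorem on the line shows that they have a common element as soon as any two of them
   do, which is exactly what the triples {x, a, b} of X provide. *)

From Stdlib Require Import Reals List Lra Psatz Classical.
Open Scope R_scope.

(** * Separation on the real line *)

Lemma real_separation (L H : R -> Prop) :
  (exists l, L l) -> (exists h, H h) -> (forall l h, L l -> H h -> l <= h) ->
  exists k, (forall l, L l -> l <= k) /\ (forall h, H h -> k <= h).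
Proof.
  intros HL [h0 Hh0] HLH.
  destruct (completeness L) as [k [Hub Hlub]].
  - exists h0. intros l Hl. exact (HLH l h0 Hl Hh0).
  - exact HL.
  - exists k. split; [exact Hub|]. intros h Hh. apply Hlub. intros l Hl. exact (HLH l h Hl Hh).
Qed.

Lemma slope_separation (T : Type) (S : T -> Prop) (A B : T -> R) :
  (exists s, S s /\ 0 < B s) -> (exists t, S t /\ B t < 0) ->
  (forall s, S s -> B s = 0 -> A s <= 0) ->
  (forall s t, S s -> S t -> 0 < B s -> B t < 0 -> B s * A t - B t * A s <= 0) ->
  exists k, forall s, S s -> A s <= k * B s.
Proof.
  intros [s1 [Hs1 Hb1]] [t1 [Ht1 Hb1']] Hzero Hcross.
  destruct (real_separation (fun r => exists s, S s /\ 0 < B s /\ r = A s / B s)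
                            (fun r => exists t, S t /\ B t < 0 /\ r = A t / B t))
    as [k [Hlo Hhi]]; eauto.
  - intros l h [s [Hs [Hbs ->]]] [t [Ht [Hbt ->]]].
    specialize (Hcross s t Hs Ht Hbs Hbt).
    apply (Rmult_le_reg_r (- (B s * B t))); [nra|].
    replace (A s / B s * - (B s * B t)) with (- (B t * A s)) by (field; lra).
    replace (A t / B t * - (B s * B t)) with (- (B s * A t)) by (field; lra).
    lra.
  - exists k. intros s Hs. destruct (Rtotal_order (B s) 0) as [Hb|[Hb|Hb]].
    + assert (k <= A s / B s) by (apply Hhi; eauto).
      assert (A s = A s / B s * B s) by (field; lra). nra.
    + rewrite Hb. specialize (Hzero s Hs Hb). lra.
    + assert (A s / B s <= k) by (apply Hlo; eauto).
      assert (A s = A s / B s * B s) by (field; lra). nra.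
Qed.

Lemma interval_helly (T : Type) (P : T -> Prop) (lo hi : T -> R) :
  (forall i j, P i -> P j -> lo i <= hi j) -> exists k, forall i, P i -> lo i <= k <= hi i.
Proof.
  intro Hlh. destruct (classic (exists i, P i)) as [[i0 Hi0]|Hno].
  - destruct (real_separation (fun r => exists i, P i /\ r = lo i)
                              (fun r => exists i, P i /\ r = hi i)) as [k [Hlo Hhi]].
    + eauto.
    + eauto.
    + intros l h [i [Hi ->]] [j [Hj ->]]. auto.
    + exists k. intros i Hi. split; [apply Hlo | apply Hhi]; eauto.
  - exists 0. intros i Hi. exfalso. eauto.
Qed.

Lemma between_mul_iff (l h b k : R) :
  l <= h -> b <> 0 -> (l <= k * b <= h <-> Rmin (l / b) (h / b) <= k <= Rmax (l / b) (h / b)).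
Proof.
  intros Hlh Hb.
  assert (El : l / b * b = l) by (field; auto). assert (Eh : h / b * b = h) by (field; auto).
  destruct (Rtotal_order b 0) as [Hn|[Hz|Hp]]; [|contradiction|].
  - assert (h / b <= l / b) by nra. rewrite Rmin_right, Rmax_left by auto.
    split; intros [H1 H2]; split; nra.
  - assert (l / b <= h / b) by nra. rewrite Rmin_left, Rmax_right by auto.
    split; intros [H1 H2]; split; nra.
Qed.

(** * Plane vectors and convex hulls *)

Definition dot (u v : pt) : R := fst u * fst v + snd u * snd v.
Definition vsub (p q : pt) : pt := (fst p - fst q, snd p - snd q).
Definition perp (u : pt) : pt := (- snd u, fst u).
Definition shift (p : pt) (t : R) (u : pt) : pt := (fst p + t * fst u, snd p + t * snd u).
Definition comb (t : R) (a b : pt) : pt :=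
  (t * fst a + (1 - t) * fst b, t * snd a + (1 - t) * snd b).

Lemma nonzero_dot_self (u : pt) : u <> (0, 0) <-> 0 < dot u u.
Proof.
  destruct u as [u1 u2]; unfold dot; simpl; split.
  - intro Hu. destruct (Req_dec u1 0) as [->|]; destruct (Req_dec u2 0) as [->|];
      [contradiction| nra | nra | nra].
  - intros H E. injection E as -> ->. lra.
Qed.

Lemma dot_decomp (w u g : pt) :
  dot w w * dot u g = dot w u * dot w g + dot (perp w) u * dot (perp w) g.
Proof. unfold dot, perp; simpl; ring. Qed.

Lemma dot_shift_l (a b v : pt) (t : R) : dot (shift a t b) v = dot a v + t * dot b v.
Proof. unfold dot, shift; simpl; ring. Qed.

Lemma dot_vsub_comb (u a b p : pt) (t : R) :
  dot u (vsub (comb t a b) p) = t * dot u (vsub a p) + (1 - t) * dot u (vsub b p).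
Proof. unfold dot, vsub, comb; simpl; ring. Qed.

Lemma dot_comm (u v : pt) : dot u v = dot v u.
Proof. unfold dot; ring. Qed.

Lemma nonzero_perp (u : pt) : u <> (0, 0) -> perp u <> (0, 0).
Proof.
  intro Hu. apply nonzero_dot_self in Hu. apply nonzero_dot_self.
  unfold dot, perp in *; simpl; lra.
Qed.

Lemma perp_orth_of_orth (w v g : pt) :
  w <> (0, 0) -> v <> (0, 0) -> dot w v = 0 -> dot v g = 0 -> dot (perp w) g = 0.
Proof.
  intros Hw Hv Hwv Hvg. apply nonzero_dot_self in Hw, Hv.
  pose proof (dot_decomp w v v) as Dv. pose proof (dot_decomp w v g) as Dg.
  rewrite Hwv in Dv, Dg. rewrite Hvg in Dg.
  assert (dot (perp w) v <> 0) by (intro E; rewrite E in Dv; nra).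
  assert (E : dot (perp w) v * dot (perp w) g = 0) by lra.
  apply Rmult_integral in E as [E|E]; [contradiction | exact E].
Qed.

Lemma two_halfplanes (g h : pt) : exists v, v <> (0, 0) /\ dot v g <= 0 /\ dot v h <= 0.
Proof.
  destruct (classic (g = (0, 0))) as [->|Hg].
  - destruct (classic (h = (0, 0))) as [->|Hh].
    + exists (1, 0). split; [intro E; injection E; lra|]. unfold dot; simpl; lra.
    + exists (perp h). split; [apply nonzero_perp; auto|]. unfold dot, perp; simpl; lra.
  - destruct (Rle_dec (dot (perp g) h) 0) as [Hle|Hgt].
    + exists (perp g). split; [apply nonzero_perp; auto|]. unfold dot, perp in *; simpl in *; lra.
    + exists (snd g, - fst g). split.
      * intro E. injection E as E1 E2. apply Hg. destruct g; simpl in *; f_equal; lra.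
      * unfold dot, perp in *; simpl in *; lra.
Qed.

Definition scale_weights (k : R) (l : list (R * pt)) : list (R * pt) :=
  map (fun wx => (k * fst wx, snd wx)) l.

Lemma wsum_scale k l : wsum (scale_weights k l) = (k * fst (wsum l), k * snd (wsum l)).
Proof.
  induction l as [|[w x] l IH]; simpl; [f_equal; ring|].
  rewrite IH; simpl; f_equal; ring.
Qed.

Lemma wtotal_scale k l : wtotal (scale_weights k l) = k * wtotal l.
Proof. induction l as [|[w x] l IH]; simpl; [ring|]. rewrite IH; ring. Qed.

Lemma wsum_app l1 l2 :
  wsum (l1 ++ l2) = (fst (wsum l1) + fst (wsum l2), snd (wsum l1) + snd (wsum l2)).
Proof.
  induction l1 as [|[w x] l IH]; simpl; [destruct (wsum l2); simpl; f_equal; ring|].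
  rewrite IH; simpl; f_equal; ring.
Qed.

Lemma wtotal_app l1 l2 : wtotal (l1 ++ l2) = wtotal l1 + wtotal l2.
Proof. induction l1 as [|[w x] l IH]; simpl; [ring|]. rewrite IH; ring. Qed.

Lemma conv_mem (S : ptset) (x : pt) : S x -> conv S x.
Proof.
  intro Hx. exists ((1, x) :: nil). repeat split.
  - repeat constructor; simpl; auto; lra.
  - simpl; ring.
  - destruct x; simpl; f_equal; ring.
Qed.

Lemma conv_comb (S : ptset) (a b : pt) (t : R) :
  conv S a -> conv S b -> 0 <= t <= 1 -> conv S (comb t a b).
Proof.
  intros [la [Hla [Hta ->]]] [lb [Hlb [Htb ->]]] Ht.
  exists (scale_weights t la ++ scale_weights (1 - t) lb). repeat split.
  - apply Forall_app; split; apply Forall_map;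
      [eapply Forall_impl; [|exact Hla] | eapply Forall_impl; [|exact Hlb]];
      intros [w x] [Hw Hx]; simpl in *; split; auto; nra.
  - rewrite wtotal_app, !wtotal_scale, Hta, Htb; ring.
  - rewrite wsum_app, !wsum_scale; unfold comb; simpl; f_equal; ring.
Qed.

Lemma conv_shift_between (S : ptset) (p u : pt) (a b l : R) :
  conv S (shift p a u) -> conv S (shift p (- b) u) -> 0 < a -> 0 < b -> - b <= l <= a ->
  conv S (shift p l u).
Proof.
  intros Ha Hb Ha0 Hb0 Hl.
  replace (shift p l u) with (comb ((l + b) / (a + b)) (shift p a u) (shift p (- b) u)).
  - apply conv_comb; auto.
    assert (Ht : (l + b) / (a + b) * (a + b) = l + b) by (field; lra).
    split; nra.
  - unfold comb, shift; simpl; f_equal; field; lra.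
Qed.

(** * Supporting lines *)

Definition supported (S : ptset) (p : pt) : Prop :=
  exists u, u <> (0, 0) /\ forall s, S s -> dot u (vsub s p) <= 0.
Definition surrounds (S : ptset) (p : pt) : Prop :=
  forall u, u <> (0, 0) -> exists s, S s /\ 0 < dot u (vsub s p).

Lemma not_supported_surrounds (S : ptset) (p : pt) : ~ supported S p -> surrounds S p.
Proof.
  intros Hns u Hu. apply NNPP. intro Hno. apply Hns. exists u. split; auto.
  intros s Hs. apply Rnot_lt_le. intro Hlt. apply Hno. eauto.
Qed.

Lemma conv_in_halfplane (S : ptset) (p u q : pt) :
  (forall s, S s -> dot u (vsub s p) <= 0) -> conv S q -> dot u (vsub q p) <= 0.
Proof.
  intros HS [l [Hl [Ht ->]]].
  enough (Hsum : dot u (wsum l) <= wtotal l * dot u p)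
    by (rewrite Ht in Hsum; unfold dot, vsub in *; simpl in *; nra).
  clear Ht. induction l as [|[w x] l IH]; simpl; [unfold dot; simpl; lra|].
  inversion Hl as [|? ? [Hw Hx] Hl']; subst; simpl in *.
  specialize (IH Hl'). specialize (HS x Hx). unfold dot, vsub in *; simpl in *. nra.
Qed.

Lemma interior_surrounds (S : ptset) (p : pt) : in_interior (conv S) p -> surrounds S p.
Proof.
  intros [e [He Hin]]. apply not_supported_surrounds. intros [u [Hu HS]].
  apply nonzero_dot_self in Hu. set (K := dot u u) in *.
  set (t := e / (1 + K)).
  assert (Ht : t * (1 + K) = e) by (unfold t; field; lra).
  assert (Ht0 : 0 < t) by (unfold t; apply Rdiv_lt_0_compat; lra).
  assert (Hq : conv S (shift p t u)).
  { apply Hin. assert (t * t * K < e * e) by (rewrite <- Ht; nra).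
    unfold dist2, shift, K, dot in *; simpl in *. nra. }
  pose proof (conv_in_halfplane S p u _ HS Hq) as Hle.
  assert (E : dot u (vsub (shift p t u) p) = t * K) by (unfold K, dot, vsub, shift; simpl; ring).
  nra.
Qed.

Lemma ray_of_line_point (S : ptset) (p u c : pt) :
  u <> (0, 0) -> conv S c -> dot (perp u) (vsub c p) = 0 -> 0 < dot u (vsub c p) ->
  exists t, 0 < t /\ conv S (shift p t u).
Proof.
  intros Hu Hc HB HA. apply nonzero_dot_self in Hu.
  exists (dot u (vsub c p) / dot u u). split; [apply Rdiv_lt_0_compat; lra|].
  replace (shift p _ u) with c; [exact Hc|].
  pose proof (dot_decomp u (vsub c p) (1, 0)) as D1.
  pose proof (dot_decomp u (vsub c p) (0, 1)) as D2.
  rewrite (dot_comm u (vsub c p)), HB in D1, D2.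
  destruct c as [c1 c2]; unfold shift; unfold dot, vsub, perp in Hu, D1, D2 |- *; simpl in *.
  f_equal; apply (Rmult_eq_reg_l (fst u * fst u + snd u * snd u)); try lra; field_simplify; lra.
Qed.

Lemma conv_crossing (S : ptset) (p u s t : pt) :
  S s -> S t -> 0 < dot (perp u) (vsub s p) -> dot (perp u) (vsub t p) < 0 ->
  exists c, conv S c /\ dot (perp u) (vsub c p) = 0 /\
    (dot (perp u) (vsub s p) - dot (perp u) (vsub t p)) * dot u (vsub c p) =
    dot (perp u) (vsub s p) * dot u (vsub t p) - dot (perp u) (vsub t p) * dot u (vsub s p).
Proof.
  intros Hs Ht Hbs Hbt.
  set (bs := dot (perp u) (vsub s p)) in *. set (bt := dot (perp u) (vsub t p)) in *.
  set (th := - bt / (bs - bt)).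
  assert (Hth : th * (bs - bt) = - bt) by (unfold th; field; lra).
  exists (comb th s t). split; [|split].
  - apply conv_comb; try apply conv_mem; auto. split; nra.
  - rewrite dot_vsub_comb. fold bs bt. nra.
  - rewrite dot_vsub_comb. fold bs bt. unfold th. field. lra.
Qed.

Lemma surrounds_ray (S : ptset) (p u : pt) :
  surrounds S p -> u <> (0, 0) -> exists t, 0 < t /\ conv S (shift p t u).
Proof.
  intros HS Hu. apply NNPP. intro Hno.
  set (A := fun s => dot u (vsub s p)). set (B := fun s => dot (perp u) (vsub s p)).
  assert (on_line : forall c, conv S c -> B c = 0 -> A c <= 0).
  { intros c Hc HB. apply Rnot_lt_le. intro HA. exact (Hno (ray_of_line_point S p u c Hu Hc HB HA)). }
  (* With no point of conv S on the open ray, S lies in the half-plane [A <= k B], so the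
     direction [u - k perp u] would support S at p. *)
  apply nonzero_dot_self in Hu as Hu'.
  destruct (slope_separation pt S A B) as [k Hk].
  - destruct (HS (perp u)) as [s [Hs Hb]]; [apply nonzero_perp; auto | eauto].
  - destruct (HS (snd u, - fst u)) as [t [Ht Hb]].
    + apply nonzero_dot_self. unfold dot in *; simpl; lra.
    + exists t. split; auto. unfold B, dot, perp, vsub in *; simpl in *. lra.
  - intros s Hs. apply on_line, conv_mem, Hs.
  - intros s t Hs Ht Hbs Hbt.
    destruct (conv_crossing S p u s t Hs Ht Hbs Hbt) as [c [Hc [HBc HAc]]].
    pose proof (on_line c Hc HBc). fold (A c) (A s) (A t) (B s) (B t) in HAc. nra.
  - destruct (HS (shift u (- k) (perp u))) as [s [Hs Hpos]].
    + intro E. assert (Hw : dot (shift u (- k) (perp u)) u = dot u u)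
        by (unfold dot, shift, perp; simpl; ring).
      rewrite E in Hw. unfold dot at 1 in Hw; simpl in Hw. lra.
    + rewrite dot_shift_l in Hpos. specialize (Hk s Hs). unfold A, B in Hk. lra.
Qed.

Lemma surrounds_interior (S : ptset) (p : pt) : surrounds S p -> in_interior (conv S) p.
Proof.
  intro HS.
  assert (ray : forall u, u <> (0, 0) -> exists t, 0 < t /\ conv S (shift p t u))
    by (intros; apply surrounds_ray; auto).
  assert (Hneg : forall t u, shift p t (- fst u, - snd u) = shift p (- t) u)
    by (intros; unfold shift; simpl; f_equal; ring).
  destruct (ray (1, 0)) as [a1 [Ha1 Ca1]]; [intro E; injection E; lra|].
  destruct (ray (-1, 0)) as [b1 [Hb1 Cb1]]; [intro E; injection E; lra|].
  destruct (ray (0, 1)) as [a2 [Ha2 Ca2]]; [intro E; injection E; lra|].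
  destruct (ray (0, -1)) as [b2 [Hb2 Cb2]]; [intro E; injection E; lra|].
  replace (-1, 0) with (- fst (1, 0), - snd (1, 0)) in Cb1 by (simpl; f_equal; ring).
  replace (0, -1) with (- fst (0, 1), - snd (0, 1)) in Cb2 by (simpl; f_equal; ring).
  rewrite Hneg in Cb1, Cb2.
  set (d := Rmin (Rmin a1 b1) (Rmin a2 b2)).
  assert (Hd : 0 < d /\ d <= a1 /\ d <= b1 /\ d <= a2 /\ d <= b2).
  { unfold d. pose proof (Rmin_l a1 b1). pose proof (Rmin_r a1 b1).
    pose proof (Rmin_l a2 b2). pose proof (Rmin_r a2 b2).
    pose proof (Rmin_l (Rmin a1 b1) (Rmin a2 b2)). pose proof (Rmin_r (Rmin a1 b1) (Rmin a2 b2)).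
    repeat split; try lra. repeat apply Rmin_glb_lt; lra. }
  exists (d / 2). split; [lra|]. intros q Hq.
  set (z1 := fst q - fst p). set (z2 := snd q - snd p).
  assert (Hz : z1 * z1 + z2 * z2 < d / 2 * (d / 2)) by (unfold dist2, z1, z2 in *; nra).
  assert (C1 : conv S (shift p (2 * z1) (1, 0))) by (apply (conv_shift_between S p _ a1 b1); auto; nra).
  assert (C2 : conv S (shift p (2 * z2) (0, 1))) by (apply (conv_shift_between S p _ a2 b2); auto; nra).
  replace q with (comb (1 / 2) (shift p (2 * z1) (1, 0)) (shift p (2 * z2) (0, 1))).
  - apply conv_comb; auto; lra.
  - unfold comb, shift, z1, z2; destruct q; simpl; f_equal; field.
Qed.

Lemma boundary_iff_supported (S : ptset) (p : pt) :
  S p -> (on_boundary (conv S) p <-> supported S p).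
Proof.
  intro Hp. split.
  - intros [_ Hni]. apply NNPP. intro Hns. apply Hni, surrounds_interior, not_supported_surrounds, Hns.
  - intros [u [Hu HS]]. split.
    + intros e He. exists p. split; [apply conv_mem; auto|]. unfold dist2. nra.
    + intro Hi. destruct (interior_surrounds S p Hi u Hu) as [s [Hs Hpos]].
      specialize (HS s Hs). lra.
Qed.

(** * Admissible centers *)

Definition supports_pair (O x y v : pt) : Prop :=
  dot v (vsub y x) <= 0 /\ dot v (vsub (refl_pt O y) x) <= 0.

Lemma supports_pairE (O x y v : pt) :
  supports_pair O x y v <-> 2 * dot v (vsub O x) <= dot v (vsub y x) <= 0.
Proof.
  assert (E : dot v (vsub (refl_pt O y) x) = 2 * dot v (vsub O x) - dot v (vsub y x))
    by (unfold dot, vsub, refl_pt; simpl; ring).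
  unfold supports_pair. rewrite E. split; intros [H1 H2]; split; lra.
Qed.

Lemma refl_ptK (O p : pt) : refl_pt O (refl_pt O p) = p.
Proof. destruct p; unfold refl_pt; simpl; f_equal; ring. Qed.

Lemma supported_refl (S : ptset) (O p : pt) :
  (forall z, S z -> S (refl_pt O z)) -> supported S p -> supported S (refl_pt O p).
Proof.
  intros Hsym [u [Hu HS]]. exists (- fst u, - snd u). split.
  - intro E. injection E as E1 E2. apply Hu. destruct u; simpl in *; f_equal; lra.
  - intros s Hs. specialize (HS _ (Hsym s Hs)).
    unfold dot, vsub, refl_pt in *; simpl in *. lra.
Qed.

Lemma supported_sym_iff (X : ptset) (O x : pt) :
  supported (set_union X (refl_set X O)) x <->
  exists v, v <> (0, 0) /\ forall y, X y -> supports_pair O x y v.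
Proof.
  split; intros [v [Hv H]]; exists v; split; auto.
  - intros y Hy. split; apply H; [left | right; exists y]; auto.
  - intros s [Hs | [y [Hy ->]]]; apply H; auto.
Qed.

Lemma admissible_centerE (X : ptset) (O : pt) :
  admissible_center X O <->
  forall x, X x -> exists v, v <> (0, 0) /\ forall y, X y -> supports_pair O x y v.
Proof.
  set (Z := set_union X (refl_set X O)).
  assert (Hsym : forall z, Z z -> Z (refl_pt O z)).
  { intros z [Hz | [y [Hy ->]]]; [right; exists z; auto | left; rewrite refl_ptK; auto]. }
  unfold admissible_center, convex_position. split.
  - intros H x Hx. apply supported_sym_iff, boundary_iff_supported; [left; auto|].
    apply H. left; auto.
  - intros H q Hq. apply boundary_iff_supported; auto.
    assert (Hx : forall x, X x -> supported Z x)
      by (intros x Hx; apply supported_sym_iff, H, Hx).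
    destruct Hq as [Hq | [y [Hy ->]]]; auto.
    apply supported_refl; auto.
Qed.

Lemma supports_pair_self (O x y v : pt) : supports_pair O x y v -> supports_pair O x x v.
Proof.
  rewrite !supports_pairE.
  assert (E : dot v (vsub x x) = 0) by (unfold dot, vsub; simpl; ring). rewrite E. lra.
Qed.

(* Up to a positive factor, every direction [v] with [v.c < 0] is some [slice c k]. *)
Definition slice (c : pt) (k : R) : pt := shift (- fst c, - snd c) k (perp c).

Lemma supports_pair_sliceE (O x y : pt) (k : R) :
  supports_pair O x y (slice (vsub O x) k) <->
  dot (vsub O x) (vsub y x) - 2 * dot (vsub O x) (vsub O x)
    <= k * dot (perp (vsub O x)) (vsub y x) <= dot (vsub O x) (vsub y x).
Proof.
  rewrite supports_pairE. unfold slice. rewrite !dot_shift_l.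
  set (c := vsub O x). set (g := vsub y x).
  assert (E1 : dot (- fst c, - snd c) c = - dot c c) by (unfold dot; simpl; ring).
  assert (E2 : dot (- fst c, - snd c) g = - dot c g) by (unfold dot; simpl; ring).
  assert (E3 : dot (perp c) c = 0) by (unfold dot, perp; simpl; ring).
  rewrite E1, E2, E3. split; intros [H1 H2]; split; lra.
Qed.

Lemma supports_pair_to_slice (O x y v : pt) :
  dot v (vsub O x) < 0 -> supports_pair O x y v ->
  supports_pair O x y (slice (vsub O x) (dot (perp (vsub O x)) v / - dot v (vsub O x))).
Proof.
  rewrite supports_pairE, supports_pair_sliceE.
  set (c := vsub O x). set (g := vsub y x). intros Hvc [H1 H2].
  set (al := - dot v c). set (be := dot (perp c) v).
  pose proof (dot_decomp c v g) as D. rewrite (dot_comm c v) in D. fold be in D.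
  assert (Hk : be / al * dot (perp c) g * al = dot c g * al + dot c c * dot v g).
  { unfold al in *. field_simplify; [|lra]. lra. }
  assert (Hcc : 0 <= dot c c) by (unfold dot; nra).
  split; apply (Rmult_le_reg_r al); unfold al in *; nra.
Qed.

Section CommonSupport.

Variables (X : ptset) (O x : pt).
Hypothesis pairwise : forall y1 y2, X y1 -> X y2 ->
  exists v, v <> (0, 0) /\ supports_pair O x y1 v /\ supports_pair O x y2 v.

Local Notation c := (vsub O x).
Local Notation a y := (dot c (vsub y x)).
Local Notation b y := (dot (perp c) (vsub y x)).

Lemma support_line (w y0 : pt) :
  w <> (0, 0) -> dot (perp w) c = 0 -> X y0 ->
  (forall v, v <> (0, 0) -> supports_pair O x y0 v -> dot w v = 0) ->
  forall y, X y -> supports_pair O x y (perp w).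
Proof.
  intros Hw Hwc Hy0 Hline y Hy.
  destruct (pairwise y0 y Hy0 Hy) as [v [Hv [H0 H1]]].
  specialize (Hline v Hv H0).
  assert (Hvc : dot v c = 0).
  { pose proof (dot_decomp w v c) as D. rewrite Hline, Hwc in D.
    apply nonzero_dot_self in Hw. nra. }
  apply supports_pairE in H1. rewrite Hvc in H1.
  assert (Hg : dot (perp w) (vsub y x) = 0) by (apply (perp_orth_of_orth w v); auto; lra).
  apply supports_pairE. rewrite Hg, Hwc. lra.
Qed.

Lemma slice_helly :
  c <> (0, 0) -> (forall y, X y -> exists k, supports_pair O x y (slice c k)) ->
  exists k, forall y, X y -> supports_pair O x y (slice c k).
Proof.
  intros Hc Hslice.
  assert (Hm : 0 <= 2 * dot c c) by (unfold dot; nra).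
  assert (flat : forall y, X y -> b y = 0 -> forall k, supports_pair O x y (slice c k)).
  { intros y Hy Hb k. destruct (Hslice y Hy) as [k0 Hk0].
    rewrite supports_pair_sliceE in Hk0 |- *. rewrite Hb in Hk0 |- *. lra. }
  assert (pair_slice : forall y1 y2, X y1 -> X y2 ->
            exists k, supports_pair O x y1 (slice c k) /\ supports_pair O x y2 (slice c k)).
  { intros y1 y2 Hy1 Hy2. destruct (pairwise y1 y2 Hy1 Hy2) as [v [Hv [H1 H2]]].
    destruct (Rtotal_order (dot v c) 0) as [Hvc|[Hvc|Hvc]].
    - eexists; split; apply supports_pair_to_slice; eauto.
    - exists 0. apply supports_pairE in H1, H2. rewrite Hvc in H1, H2.
      split; apply flat; auto; apply (perp_orth_of_orth c v); auto;
        rewrite ?(dot_comm c v); lra.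
    - apply supports_pairE in H1. exfalso. lra. }
  set (lo := fun y => Rmin ((a y - 2 * dot c c) / b y) (a y / b y)).
  set (hi := fun y => Rmax ((a y - 2 * dot c c) / b y) (a y / b y)).
  assert (interval : forall y k, b y <> 0 ->
            (supports_pair O x y (slice c k) <-> lo y <= k <= hi y)).
  { intros y k Hb. rewrite supports_pair_sliceE. apply between_mul_iff; auto. lra. }
  destruct (interval_helly pt (fun y => X y /\ b y <> 0) lo hi) as [k Hk].
  - intros y1 y2 [Hy1 Hb1] [Hy2 Hb2]. destruct (pair_slice y1 y2 Hy1 Hy2) as [k [H1 H2]].
    apply interval in H1; apply interval in H2; auto. lra.
  - exists k. intros y Hy. destruct (Req_dec (b y) 0) as [Hb|Hb].
    + apply flat; auto.
    + apply interval; auto.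
Qed.

Lemma common_support : exists v, v <> (0, 0) /\ forall y, X y -> supports_pair O x y v.
Proof.
  destruct (classic (c = (0, 0))) as [Hc|Hc].
  - destruct (classic (exists y0, X y0 /\ vsub y0 x <> (0, 0))) as [[y0 [Hy0 Hg0]]|Hno].
    + exists (perp (vsub y0 x)). split; [apply nonzero_perp; auto|].
      apply (support_line _ y0); auto.
      * rewrite Hc. unfold dot; simpl; ring.
      * intros v Hv H0. apply supports_pairE in H0. rewrite Hc in H0.
        unfold dot at 1 in H0; simpl in H0. rewrite dot_comm. lra.
    + exists (1, 0). split; [intro E; injection E; lra|]. intros y Hy.
      assert (Hg : vsub y x = (0, 0)) by (apply NNPP; intro; apply Hno; eauto).
      apply supports_pairE. rewrite Hc, Hg. unfold dot; simpl. lra.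
  - destruct (classic (forall y, X y -> exists k, supports_pair O x y (slice c k)))
      as [Hs|Hns].
    + destruct (slice_helly Hc Hs) as [k Hk]. exists (slice c k). split; auto.
      intro E. apply nonzero_dot_self in Hc.
      assert (D : dot (slice c k) c = - dot c c)
        by (unfold slice, dot, shift, perp; simpl; ring).
      rewrite E in D. unfold dot at 1 in D; simpl in D. lra.
    + apply not_all_ex_not in Hns as [y0 Hy0].
      apply imply_to_and in Hy0 as [Hy0 Hnone].
      exists (perp c). split; [apply nonzero_perp; auto|].
      apply (support_line _ y0); auto.
      * unfold dot, perp; simpl; ring.
      * intros v Hv H0. rewrite dot_comm.
        destruct (Rtotal_order (dot v c) 0) as [Hvc|[Hvc|Hvc]]; auto.
        -- exfalso. apply Hnone. eexists. apply supports_pair_to_slice; eauto.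
        -- apply supports_pairE in H0. lra.
Qed.

End CommonSupport.

Lemma pairwise_support_of_triples (X : ptset) (O x a b : pt) :
  (forall Y : ptset, subset Y X -> card3 Y -> M Y O) -> X x -> X a -> X b ->
  exists v, v <> (0, 0) /\ supports_pair O x a v /\ supports_pair O x b v.
Proof.
  intros H3 Hx Ha Hb.
  assert (single : forall y, exists v, v <> (0, 0) /\ supports_pair O x y v)
    by (intro y; apply two_halfplanes).
  destruct (classic (a = b)) as [<-|Hab].
  { destruct (single a) as [v [Hv H]]. eauto. }
  destruct (classic (x = a)) as [<-|Hxa].
  { destruct (single b) as [v [Hv H]]. eauto using supports_pair_self. }
  destruct (classic (x = b)) as [<-|Hxb].
  { destruct (single a) as [v [Hv H]]. eauto using supports_pair_self. }
  set (Y := fun z => z = x \/ z = a \/ z = b).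
  assert (HY : M Y O).
  { apply H3.
    - intros z [->|[->| ->]]; auto.
    - exists x, a, b. repeat split; auto. }
  destruct (proj1 (admissible_centerE Y O) HY x (or_introl eq_refl)) as [v [Hv Hall]].
  exists v. split; [auto|]. split; apply Hall; unfold Y; auto.
Qed.

Theorem mainTheorem5 (X : ptset) (hX : convex_position X) :
  forall O : pt, M X O <-> (forall Y : ptset, subset Y X -> card3 Y -> M Y O).
Proof.
  (* The equality holds for every X. *)
  intro O. unfold M. split.
  - intros HX Y HYX _. apply admissible_centerE. intros y Hy.
    destruct (proj1 (admissible_centerE X O) HX y (HYX y Hy)) as [v [Hv Hall]].
    exists v. split; auto.
  - intro H3. apply admissible_centerE. intros x Hx.
    apply common_support. intros a b Ha Hb.
    exact (pairwise_support_of_triples X O x a b H3 Hx Ha Hb).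
Qed.
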